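(* Let $d\le n$ be positive integers (with $d\ll n$), let $U\subseteq\mathbb{R}^n$, and let $F:U\to\mathbb{R}^n$ with $F(\bar x)=0$ for some $\bar x\in U$, and let $\mathcal{H}F:U\rightrightarrows\mathbb{R}^{n\times n}$ be a set-valued map and $c>0$ such that $$\forall x\in U,\quad \sup_{H\in\mathcal{H}F(x)}\|F(x)-H(x-\bar x)\|\le c\,\|x-\bar x\|.$$ Let $\mathcal{S}$ be a Johnson–Lindenstrauss-type probability distribution over $\mathbb{R}^{d\times n}$ (see context). Let $y\in U$, $H\in\mathcal{H}F(y)$, let $S$ be sampled from $\mathcal{S}$, and assume there exist $\varepsilon>0$ and $\delta>0$ such that, with probability at least $1-\delta$, all three of the following hold: (i) $\|S^TSHS^TS-H\|\le\varepsilon$; (ii) $\|y-\bar x-S^T(SHS^T)^{-1}SF(y)\|\le(1+\varepsilon)\,\|Sy-S\bar x-(SHS^T)^{-1}SF(y)\|$; (iii) $\|SF(y)-(SHS^T)S(y-\bar x)\|\le(1+\varepsilon)\,\|F(y)-S^T(SHS^T)S(y-\bar x)\|$. Let $y^{+}=y-S^T(SHS^T)^{-1}SF(y)$ (an element of the sketched Newton-type operator $\mathcal{N}_{\mathcal{H}F}(y,S)$, so $SHS^T$ is invertible). Then $$\mathbb{P}\left(\|y^{+}-\bar x\|\le(1+\varepsilon)^2(c+\varepsilon)\,\|(SHS^T)^{-1}\|\,\|y-\bar x\|\right)\ge 1-\delta.$$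
   Context: Norms are Euclidean on vectors and Frobenius on matrices. A Johnson–Lindenstrauss-type distribution over $\mathbb{R}^{d\times n}$ is one for which there are $\varepsilon'>0$, $\delta'<1/2$ with $d\in\mathcal{O}(-\varepsilon'^{-2}\log\delta')$ such that for every $x\in\mathbb{R}^n$ with $\|x\|=1$, a sample $A$ satisfies $\mathbb{P}(|\|Ax\|^2-1|\le\varepsilon')\ge 1-\delta'$ (e.g. matrices with i.i.d. standard normal entries). The sketched Newton-type operator is $\mathcal{N}_{\mathcal{H}F}(x,S)=\{x-S^T(SHS^T)^{-1}SF(x)\;|\;H\in\mathcal{H}F(x),\ \det SHS^T\neq 0\}$. *)

From HB Require Import structures.
From mathcomp Require Import all_boot all_order all_algebra.
From mathcomp Require Import all_classical all_reals all_analysis.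
Set Implicit Arguments. Unset Strict Implicit. Unset Printing Implicit Defensive.
Import Order.TTheory GRing.Theory Num.Theory.
Local Open Scope classical_set_scope.
Local Open Scope ring_scope.

(* Frobenius norm of a matrix; for column vectors 'cV_n this is the Euclidean norm. *)
Definition frob {R : realType} {m n : nat} (A : 'M[R]_(m, n)) : R :=
  Num.sqrt (\sum_(i < m) \sum_(j < n) A i j ^+ 2).

Definition JL_type {d0 : measure_display} {T : measurableType d0} {R : realType}
  (P : probability T R) (d n : nat) (S : T -> 'M[R]_(d, n)) : Prop :=
  exists (eps' delta' C : R),
    [/\ 0 < eps', 0 < delta', delta' < 2^-1, 0 < C &
        d%:R <= C * (- (eps' ^-2) * ln delta')] /\
        forall x : 'cV[R]_n, frob x = 1 ->
          (P [set w | (`| frob (S w *m x) ^+ 2 - 1 | <= eps')%R] >= (1 - delta')%:E)%E.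

(* On the event where (i)-(iii) hold the bound is deterministic.  Writing
   M = S H S^T and e = y - xbar, (ii) bounds the error of the step by
   (1+eps) |S e - M^-1 S F(y)| = (1+eps) |M^-1 (S F(y) - M S e)|
   <= (1+eps) |M^-1| |S F(y) - M S e|, and (iii) bounds the last factor by
   (1+eps) |F(y) - S^T M S e|.  Since
   F(y) - S^T M S e = (F(y) - H e) - (S^T S H S^T S - H) e,
   the approximation property of HF and (i) bound it by (c + eps) |e|.
   Hence the target event contains the event of (i)-(iii), and both are
   measurable since all quantities are built from the entries of S by sums,
   products and, for M^-1 = adj M / det M, one reciprocal. *)

From HB Require Import structures.
From mathcomp Require Import all_boot all_order all_algebra.
From mathcomp Require Import all_classical all_reals all_analysis.
From mathcomp Require Import measurable_realfun.
From mathcomp Require Import ring lra.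
Set Implicit Arguments. Unset Strict Implicit. Unset Printing Implicit Defensive.
Import Order.TTheory GRing.Theory Num.Theory.
Local Open Scope classical_set_scope.
Local Open Scope ring_scope.

Lemma sum_CauchySchwarz (R : realFieldType) (I : finType) (a b : I -> R) :
  (\sum_i a i * b i) ^+ 2 <= (\sum_i a i ^+ 2) * (\sum_i b i ^+ 2).
Proof.
have lagrange : \sum_i \sum_j (a i * b j - a j * b i) ^+ 2 =
    2 * ((\sum_i a i ^+ 2) * (\sum_i b i ^+ 2) - (\sum_i a i * b i) ^+ 2).
  have -> : \sum_i \sum_j (a i * b j - a j * b i) ^+ 2 = \sum_i \sum_j
      (a i ^+ 2 * b j ^+ 2 + a j ^+ 2 * b i ^+ 2 - 2 * (a i * b i * (a j * b j))).
    by apply: eq_bigr => i _; apply: eq_bigr => j _; ring.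
  under eq_bigr do rewrite sumrB big_split /=.
  rewrite sumrB big_split /=.
  under [X in _ - X]eq_bigr do rewrite -mulr_sumr.
  rewrite -mulr_sumr [X in _ + X - _]exchange_big /= expr2 !big_distrlr /=; ring.
have : 0 <= \sum_i \sum_j (a i * b j - a j * b i) ^+ 2.
  by apply: sumr_ge0 => i _; apply: sumr_ge0 => j _; exact: sqr_ge0.
rewrite lagrange; lra.
Qed.

Section FrobeniusNorm.
Variable R : realType.
Implicit Types m n p : nat.

Lemma sumr_sqr_mx_ge0 m n (A : 'M[R]_(m, n)) : 0 <= \sum_i \sum_j A i j ^+ 2.
Proof. by apply: sumr_ge0 => i _; apply: sumr_ge0 => j _; exact: sqr_ge0. Qed.

Lemma frob_ge0 m n (A : 'M[R]_(m, n)) : 0 <= frob A.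
Proof. exact: sqrtr_ge0. Qed.

Lemma sqr_frob m n (A : 'M[R]_(m, n)) : frob A ^+ 2 = \sum_i \sum_j A i j ^+ 2.
Proof. exact/sqr_sqrtr/sumr_sqr_mx_ge0. Qed.

Lemma frob_le_sqr m n (A : 'M[R]_(m, n)) (b : R) :
  0 <= b -> \sum_i \sum_j A i j ^+ 2 <= b ^+ 2 -> frob A <= b.
Proof. by rewrite -sqr_frob => b_ge0; rewrite ler_pXn2r// nnegrE ?frob_ge0. Qed.

Lemma frobN m n (A : 'M[R]_(m, n)) : frob (- A) = frob A.
Proof.
by congr Num.sqrt; apply: eq_bigr => i _; apply: eq_bigr => j _; rewrite mxE sqrrN.
Qed.

Lemma frob_mulmx_le m n p (A : 'M[R]_(m, n)) (B : 'M[R]_(n, p)) :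
  frob (A *m B) <= frob A * frob B.
Proof.
apply: frob_le_sqr; first by rewrite mulr_ge0 ?frob_ge0.
rewrite exprMn !sqr_frob [X in _ <= _ * X]exchange_big /= big_distrlr /=.
by apply: ler_sum => i _; apply: ler_sum => j _; rewrite mxE sum_CauchySchwarz.
Qed.

Lemma frobD_le m n (A B : 'M[R]_(m, n)) : frob (A + B) <= frob A + frob B.
Proof.
apply: frob_le_sqr; first by rewrite addr_ge0 ?frob_ge0.
have inner_le : \sum_i \sum_j A i j * B i j <= frob A * frob B.
  apply: le_trans (ler_norm _) _; rewrite -(@ler_pXn2r _ 2)// ?nnegrE ?mulr_ge0 ?frob_ge0//.
  by rewrite real_normK ?num_real// exprMn !sqr_frob !pair_bigA sum_CauchySchwarz.
have -> : \sum_i \sum_j (A + B) i j ^+ 2 =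
    \sum_i \sum_j A i j ^+ 2 + 2 * (\sum_i \sum_j A i j * B i j) + \sum_i \sum_j B i j ^+ 2.
  rewrite mulr_sumr -!big_split /=; apply: eq_bigr => i _.
  rewrite mulr_sumr -!big_split /=; apply: eq_bigr => j _; rewrite mxE; ring.
rewrite sqrrD -!sqr_frob; lra.
Qed.

Lemma frob_sub_mulmx_le m n p (A : 'M[R]_(m, p)) (K : 'M[R]_(m, n)) (e : 'M[R]_(n, p)) :
  frob (A - K *m e) <= frob A + frob K * frob e.
Proof. by apply: le_trans (frobD_le _ _) _; rewrite frobN lerD2l frob_mulmx_le. Qed.

End FrobeniusNorm.

Lemma sketched_residualE (R : comUnitRingType) d n (s : 'M[R]_(d, n)) (M : 'M[R]_d)
    (f y xbar : 'cV[R]_n) :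
  M \in unitmx ->
  s *m y - s *m xbar - invmx M *m s *m f = - (invmx M *m (s *m f - M *m s *m (y - xbar))).
Proof.
by move=> M_unit; rewrite mulmxBr !mulmxA mulVmx// mul1mx opprB -mulmxBr.
Qed.

Lemma lifted_residualE (R : pzRingType) d n (s : 'M[R]_(d, n)) (H : 'M[R]_n)
    (f e : 'cV[R]_n) :
  f - s^T *m (s *m H *m s^T) *m s *m e =
    (f - H *m e) - (s^T *m s *m H *m s^T *m s - H) *m e.
Proof. by rewrite mulmxBl opprB addrA subrK !mulmxA. Qed.

Lemma sketched_newton_step_le (R : realType) d n (s : 'M[R]_(d, n)) (H : 'M[R]_n)
    (f y xbar : 'cV[R]_n) (c eps : R) :
  s *m H *m s^T \in unitmx ->
  frob (f - H *m (y - xbar)) <= c * frob (y - xbar) ->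
  frob (s^T *m s *m H *m s^T *m s - H) <= eps ->
  frob (y - xbar - s^T *m invmx (s *m H *m s^T) *m s *m f)
    <= (1 + eps) * frob (s *m y - s *m xbar - invmx (s *m H *m s^T) *m s *m f) ->
  frob (s *m f - (s *m H *m s^T) *m s *m (y - xbar))
    <= (1 + eps) * frob (f - s^T *m (s *m H *m s^T) *m s *m (y - xbar)) ->
  frob ((y - s^T *m invmx (s *m H *m s^T) *m s *m f) - xbar)
    <= (1 + eps) ^+ 2 * (c + eps) * frob (invmx (s *m H *m s^T)) * frob (y - xbar).
Proof.
move=> M_unit H_approx sketch_err newton_err residual_err.
have eps_ge0 : 0 <= eps := le_trans (frob_ge0 _) sketch_err.
have lifted_le : frob (f - s^T *m (s *m H *m s^T) *m s *m (y - xbar))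
    <= (c + eps) * frob (y - xbar).
  rewrite lifted_residualE; apply: le_trans (frob_sub_mulmx_le _ _ _) _.
  by rewrite mulrDl lerD// ler_wpM2r// frob_ge0.
have residual_le : frob (s *m f - (s *m H *m s^T) *m s *m (y - xbar))
    <= (1 + eps) * ((c + eps) * frob (y - xbar)).
  by apply: le_trans residual_err _; rewrite ler_wpM2l//; lra.
rewrite addrAC; apply: le_trans newton_err _.
rewrite sketched_residualE// frobN.
apply: le_trans (ler_wpM2l _ (frob_mulmx_le _ _)) _; first lra.
rewrite [X in _ <= X](_ : _ = (1 + eps) * (frob (invmx (s *m H *m s^T)) *
    ((1 + eps) * ((c + eps) * frob (y - xbar))))); last by ring.
by rewrite ler_wpM2l ?ler_wpM2l ?frob_ge0//; lra.
Qed.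

Section MeasurableMatrix.
Context {d0 : measure_display} {T : measurableType d0} {R : realType}.

Definition measurable_mx p q (A : T -> 'M[R]_(p, q)) :=
  forall i j, measurable_fun setT (fun w => A w i j).

Lemma measurable_inv : measurable_fun setT (@GRing.inv R).
Proof.
rewrite (_ : setT = [set~ (0 : R)] `|` [set 0]); last first.
  by apply/seteqP; split => x //= _; case: (eqVneq x 0) => [->|/eqP]; [right|left].
apply/measurable_funU => //; first exact: measurableC.
split; last exact: measurable_fun_set1.
apply: open_continuous_measurable_fun.
  exact/closed_openC/accessible_closed_set1/hausdorff_accessible/Rhausdorff.
by move=> x; rewrite inE => /eqP x_neq0; exact: inv_continuous.
Qed.

Lemma measurable_mx_cst p q (M : 'M[R]_(p, q)) : measurable_mx (fun _ => M).
Proof. by move=> i j; exact: measurable_cst. Qed.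

Lemma measurable_mxD p q (A B : T -> 'M[R]_(p, q)) :
  measurable_mx A -> measurable_mx B -> measurable_mx (fun w => A w + B w).
Proof.
move=> mA mB i j; under eq_fun do rewrite mxE; exact: measurable_funD.
Qed.

Lemma measurable_mxN p q (A : T -> 'M[R]_(p, q)) :
  measurable_mx A -> measurable_mx (fun w => - A w).
Proof. by move=> mA i j; under eq_fun do rewrite mxE; exact: measurable_funN. Qed.

Lemma measurable_trmx p q (A : T -> 'M[R]_(p, q)) :
  measurable_mx A -> measurable_mx (fun w => (A w)^T).
Proof. by move=> mA i j; under eq_fun do rewrite mxE; exact: mA. Qed.

Lemma measurable_mulmx p q r (A : T -> 'M[R]_(p, q)) (B : T -> 'M[R]_(q, r)) :
  measurable_mx A -> measurable_mx B -> measurable_mx (fun w => A w *m B w).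
Proof.
move=> mA mB i j; under eq_fun do rewrite mxE.
by apply: measurable_sum => k; exact: measurable_funM.
Qed.

Lemma measurable_scalemx p q (f : T -> R) (A : T -> 'M[R]_(p, q)) :
  measurable_fun setT f -> measurable_mx A -> measurable_mx (fun w => f w *: A w).
Proof. by move=> mf mA i j; under eq_fun do rewrite mxE; exact: measurable_funM. Qed.

Lemma measurable_det p (A : T -> 'M[R]_p) :
  measurable_mx A -> measurable_fun setT (fun w => \det (A w)).
Proof.
move=> mA; apply: measurable_sum => s; apply: measurable_funM; first exact: measurable_cst.
by apply: measurable_prod => i _; exact: mA.
Qed.

Lemma measurable_adj p (A : T -> 'M[R]_p) :
  measurable_mx A -> measurable_mx (fun w => \adj (A w)).
Proof.
move=> mA i j; under eq_fun do rewrite mxE.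
apply: measurable_funM; first exact: measurable_cst.
apply: (measurable_det (A := fun w => row' j (col' i (A w)))) => k l.
by under eq_fun do rewrite !mxE; exact: mA.
Qed.

Lemma measurable_invmx p (A : T -> 'M[R]_p) :
  measurable_mx A -> (forall w, A w \in unitmx) -> measurable_mx (fun w => invmx (A w)).
Proof.
move=> mA A_unit; under eq_fun do rewrite /invmx A_unit.
apply: measurable_scalemx; last exact: measurable_adj.
exact: measurableT_comp measurable_inv (measurable_det mA).
Qed.

Lemma measurable_frob p q (A : T -> 'M[R]_(p, q)) :
  measurable_mx A -> measurable_fun setT (fun w => frob (A w)).
Proof.
move=> mA; apply: measurableT_comp (continuous_measurable_fun (@sqrt_continuous R)) _.
by apply: measurable_sum => i; apply: measurable_sum => j; exact: measurable_funX.
Qed.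

End MeasurableMatrix.

Ltac solve_measurable_mx := repeat
  match goal with
  | |- measurable_mx (fun _ => ?M) => exact: measurable_mx_cst
  | |- measurable_fun _ (fun _ => ?r) => exact: measurable_cst
  | |- measurable_mx (fun _ => _ + _) => apply: measurable_mxD
  | |- measurable_mx (fun _ => - _) => apply: measurable_mxN
  | |- measurable_mx (fun _ => _ *m _) => apply: measurable_mulmx
  | |- measurable_mx (fun _ => _^T) => apply: measurable_trmx
  | |- measurable_mx (fun _ => invmx _) => apply: measurable_invmx
  | |- measurable_fun _ (fun _ => frob _) => apply: measurable_frob
  | |- measurable_fun _ (fun _ => _ * _) => apply: measurable_funM
  | |- _ => assumption
  end.

Section MeasurableEvents.
Context {d0 : measure_display} {T : measurableType d0} {R : realType}.

Lemma measurable_set_le (f g : T -> R) :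
  measurable_fun setT f -> measurable_fun setT g -> measurable [set w | f w <= g w].
Proof. by move=> mf mg; rewrite -[X in measurable X]setTI; exact: measurable_fun_le. Qed.

Lemma measurable_and3 (P1 P2 P3 : T -> Prop) :
  measurable [set w | P1 w] -> measurable [set w | P2 w] -> measurable [set w | P3 w] ->
  measurable [set w | [/\ P1 w, P2 w & P3 w]].
Proof.
move=> m1 m2 m3; rewrite (_ : [set w | _] = [set w | P1 w] `&` [set w | P2 w] `&` [set w | P3 w]).
  by apply: measurableI => //; exact: measurableI.
by apply/seteqP; split => w /=; [case=> ? ? ?|case=> -[? ?] ?].
Qed.

End MeasurableEvents.

Theorem mainTheorem6
  (d0 : measure_display) (T : measurableType d0) (R : realType)
  (P : probability T R) (d n : nat)
  (U : set 'cV[R]_n) (F : 'cV[R]_n -> 'cV[R]_n) (xbar : 'cV[R]_n)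
  (HF : 'cV[R]_n -> set 'M[R]_n) (c : R)
  (S : T -> 'M[R]_(d, n)) (y : 'cV[R]_n) (H : 'M[R]_n) (eps delta : R) :
  (0 < d)%N -> (d <= n)%N ->
  U xbar -> F xbar = 0 ->
  0 < c ->
  (forall x, U x -> forall H', HF x H' -> frob (F x - H' *m (x - xbar)) <= c * frob (x - xbar)) ->
  (forall i j, measurable_fun setT (fun w => S w i j)) ->
  JL_type P S ->
  U y -> HF y H ->
  0 < eps -> 0 < delta ->
  (forall w, S w *m H *m (S w)^T \in unitmx) ->
  (P [set w | (
       [/\ frob ((S w)^T *m S w *m H *m (S w)^T *m S w - H) <= eps,
           frob (y - xbar - (S w)^T *m invmx (S w *m H *m (S w)^T) *m S w *m F y)
             <= (1 + eps) * frob (S w *m y - S w *m xbar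
                                  - invmx (S w *m H *m (S w)^T) *m S w *m F y) &
           frob (S w *m F y - (S w *m H *m (S w)^T) *m S w *m (y - xbar))
             <= (1 + eps) * frob (F y - (S w)^T *m (S w *m H *m (S w)^T) *m S w *m (y - xbar))])%R]
     >= (1 - delta)%:E)%E ->
  (P [set w | (
       frob ((y - (S w)^T *m invmx (S w *m H *m (S w)^T) *m S w *m F y) - xbar)
         <= (1 + eps) ^+ 2 * (c + eps) * frob (invmx (S w *m H *m (S w)^T)) * frob (y - xbar))%R]
     >= (1 - delta)%:E)%E.
Proof.
move=> _ _ _ _ _ H_approx mS _ Uy HFy _ _ M_unit good_event_ge.
apply: le_trans good_event_ge _; apply: le_measure; rewrite ?inE.
- by apply: measurable_and3; apply: measurable_set_le; solve_measurable_mx.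
- by apply: measurable_set_le; solve_measurable_mx.
- move=> w /= [sketch_err newton_err residual_err].
  exact: sketched_newton_step_le (H_approx y Uy H HFy) sketch_err newton_err residual_err.
Qed.
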